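(* Let $\Gamma=\mathbb F_r$ and $\varepsilon\in(0,1/2]$. For every $\delta>0$ there is a weak* open neighborhood $\mathcal O$ of $\mathrm{Is}_\varepsilon$ such that for every finite set $V$ and every $\sigma\in\mathrm{Hom}(\Gamma,\mathrm{Sym}(V))$: if $\Omega(\sigma,\mathcal O)\ne\varnothing$ then $\mathsf{mcut}(\sigma)<|V|r(\varepsilon+\delta)$.
   Context: $\Gamma=\mathbb F_r$ is the free group on $s_1,\dots,s_r$, acting on $\{\pm1\}^\Gamma$ by $(\beta\mathbf x)(\gamma)=\mathbf x(\gamma\beta)$. For a finite set $V$ and $\sigma\in\mathrm{Hom}(\mathbb F_r,\mathrm{Sym}(V))$ (write $\sigma^\gamma=\sigma(\gamma)$), the graph of $\sigma$ is the multigraph with one edge $\{v,\sigma^{s_i}v\}$ for each $v\in V$, $i\in[r]$ (so $|V|r$ edges). For $\mathbf x\in\{\pm1\}^V$, $\Pi^\sigma_v\mathbf x=(\mathbf x(\sigma^\gamma v))_{\gamma\in\Gamma}$, $P^\sigma_{\mathbf x}=\frac1{|V|}\sum_v\delta_{\Pi^\sigma_v\mathbf x}$, and $\Omega(\sigma,\mathcal O)=\{\mathbf x:P^\sigma_{\mathbf x}\in\mathcal O\}$. For $\varepsilon\in(0,1/2]$, $\mathrm{Is}_\varepsilon$ is the free-boundary Ising measure: the law of the $\{-1,+1\}$-valued, $\Gamma$-indexed stationary Markov chain on the Cayley tree with uniform single-site marginal and transition matrix $\begin{pmatrix}1-\varepsilon&\varepsilon\\ \varepsilon&1-\varepsilon\end{pmatrix}$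 across each edge. A bisection of $V$ is a partition $V=V_1\sqcup V_2$ with $||V_1|-|V_2||\le1$; its cut size is the number of edges of the graph of $\sigma$ with endpoints in different parts; $\mathsf{mcut}(\sigma)$ is the minimum cut size over all bisections. *)

From mathcomp Require Import all_boot all_order all_algebra all_fingroup.
From mathcomp Require Import reals.
Set Implicit Arguments. Unset Strict Implicit. Unset Printing Implicit Defensive.
Import Order.TTheory GRing.Theory Num.Theory.
Local Open Scope ring_scope.

(* A letter (i, false) stands for s_i, (i, true) for s_i^{-1}. *)
Definition letter (r : nat) := ('I_r * bool)%type.
Definition word (r : nat) := seq (letter r).

Definition cancels r (l l' : letter r) : bool := (l.1 == l'.1) && (l.2 != l'.2).

Fixpoint rwords (r k : nat) : seq (word r) :=
  match k with
  | 0 => [:: [::]]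
  | k.+1 => flatten [seq [seq (l :: w) | l <- enum {: 'I_r * bool} &
                          (if w is l' :: _ then ~~ cancels l l' else true)]
                    | w <- rwords r k]
  end.

Definition ball (r n : nat) : seq (word r) :=
  flatten [seq rwords r k | k <- iota 0 n.+1].

(* A homomorphism F_r -> Sym(V) is given by the images of the free generators;
   sigma^gamma for gamma = l_1 ... l_k acts as sigma^{l_1} o ... o sigma^{l_k}. *)
Definition lact r (V : finType) (sigma : 'I_r -> {perm V}) (l : letter r) (v : V) : V :=
  if l.2 then ((sigma l.1)^-1)%g v else sigma l.1 v.

Definition word_act r (V : finType) (sigma : 'I_r -> {perm V}) (w : word r) (v : V) : V :=
  foldr (lact sigma) v w.

(* Spins: true = +1, false = -1.  A pattern xi : word r -> bool is only
   looked at on the ball B_n. *)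

(* Free-boundary Ising measure Is_eps of the cylinder {y : y|_{B_n} = xi|_{B_n}}:
   the Cayley-tree edges (compatible with the shift (beta y)(g) = y(g beta)) are
   {g, s g}; inside B_n every non-trivial reduced word w = l :: w' has the unique
   parent w' = behead w. *)
Definition Is_cyl (R : realType) (r : nat) (eps : R) (n : nat) (xi : word r -> bool) : R :=
  2^-1 * \prod_(w <- ball r n | w != [::])
            (if xi w == xi (behead w) then 1 - eps else eps).

Definition emp_cyl (R : realType) r (V : finType) (sigma : 'I_r -> {perm V})
    (x : {ffun V -> bool}) (n : nat) (xi : word r -> bool) : R :=
  (#|[set v : V | all (fun w => x (word_act sigma w v) == xi w) (ball r n)]|%:R)
    / (#|V|%:R).

(* The basic weak* neighbourhood O_{n,eta} of Is_eps:
   { nu : |nu(C) - Is_eps(C)| < eta for every cylinder C over B_n },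
   and Omega(sigma, O_{n,eta}) is the set of x with P^sigma_x in it. *)
Definition in_Omega (R : realType) r (eps : R) (n : nat) (eta : R)
    (V : finType) (sigma : 'I_r -> {perm V}) (x : {ffun V -> bool}) : Prop :=
  forall xi : word r -> bool, `|emp_cyl R sigma x n xi - Is_cyl eps n xi| < eta.

Definition cut r (V : finType) (sigma : 'I_r -> {perm V}) (A : {set V}) : nat :=
  #|[set p : V * 'I_r | (p.1 \in A) != (sigma p.2 p.1 \in A)]|.

Definition is_bisection (V : finType) (A : {set V}) : bool :=
  (#|A| <= (#|~: A|).+1)%N && (#|~: A| <= (#|A|).+1)%N.

Definition mcut r (V : finType) (sigma : 'I_r -> {perm V}) : nat :=
  \big[minn/(#|V| * r)%N]_(A : {set V} | is_bisection A) cut sigma A.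

From mathcomp Require Import all_boot all_order all_algebra all_fingroup.
From mathcomp Require Import reals.
From mathcomp Require Import zify ring lra.
Set Implicit Arguments. Unset Strict Implicit. Unset Printing Implicit Defensive.
Import Order.TTheory GRing.Theory Num.Theory.

(* Under Is_eps the root
   spin is +1 with probability 1/2 and each neighbour disagrees with it with
   probability eps.  If P^sigma_x is close to Is_eps on such balls, then for
   every generator s_i about an eps fraction of the vertices v satisfy
   x v <> x (sigma^{s_i} v), so the level set {x = +1} has cut about eps |V| r;
   and it has about |V|/2 elements, so moving its surplus vertices across turns
   it into a bisection while adding at most 2r cut edges per moved vertex. *)

Section Cuts.

Variables (r : nat) (V : finType) (sigma : 'I_r -> {perm V}).

Lemma mcut_le_cut (A : {set V}) : is_bisection A -> (mcut sigma <= cut sigma A)%N.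
Proof.
by move=> bisA; rewrite /mcut -minEnat; exact: (bigmin_le_cond _ (cut sigma) bisA).
Qed.

Lemma cut_setC (A : {set V}) : cut sigma (~: A) = cut sigma A.
Proof. by apply: eq_card => p; rewrite !inE; case: (_ \in A); case: (_ \in A). Qed.

Lemma cut_level_set (x : {ffun V -> bool}) :
  cut sigma [set v | x v] = (\sum_(i < r) #|[set v | x v != x (sigma i v)]|)%N.
Proof.
rewrite /cut -sum1_card (eq_bigl (fun p => x p.1 != x (sigma p.2 p.1))); last first.
  by move=> p; rewrite !inE.
rewrite -(pair_big_dep predT (fun v i => x v != x (sigma i v)) (fun _ _ => 1%N)) /=.
rewrite (exchange_big_dep predT) //=; apply: eq_bigr => i _.
by rewrite -sum1_card; apply: eq_bigl => v; rewrite inE.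
Qed.

Lemma card_edges_from (D : {set V}) :
  #|[set p : V * 'I_r | p.1 \in D]| = (#|D| * r)%N.
Proof.
rewrite -[X in (_ * X)%N](card_ord r) -cardsT -cardsX.
by apply: eq_card => p; rewrite !inE andbT.
Qed.

Lemma card_edges_into (D : {set V}) :
  #|[set p : V * 'I_r | sigma p.2 p.1 \in D]| = (#|D| * r)%N.
Proof.
pose psi (p : V * 'I_r) := (sigma p.2 p.1, p.2).
have psi_inj : injective psi by move=> [u i] [w j] [+ eij]; rewrite /= eij => /perm_inj->.
rewrite -[X in (_ * X)%N](card_ord r) -cardsT -cardsX -(card_preimset (setX D setT) psi_inj).
by apply: eq_card => p; rewrite !inE andbT.
Qed.

(* Moving the surplus D := A \ B of the larger side into the other side cuts
   at most the 2 r |D| edges incident to D. *)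
Lemma exists_bisection_cut_le (A : {set V}) : (#|~: A| <= #|A|)%N ->
  exists2 B, is_bisection B & (cut sigma B <= cut sigma A + 2 * r * (#|A| - #|~: A|))%N.
Proof.
move=> leCA; have cardA := cardsC A.
pose k := (#|V| %/ 2)%N; pose B := [set v in take k (enum A)].
have kA : (k <= #|A|)%N by rewrite /k; lia.
have cardB : #|B| = k.
  by rewrite cardsE (card_uniqP _) ?take_uniq ?enum_uniq // size_takel // -cardE.
have subBA : B \subset A.
  by apply/subsetP => v; rewrite inE => /mem_take; rewrite mem_enum.
have cardBC := cardsC B.
exists B; first by rewrite /is_bisection cardB; apply/andP; split; rewrite /k; lia.
pose D := A :\: B.
have cardD : #|D| = (#|A| - k)%N by rewrite cardsD (setIidPr subBA) cardB.
have memB u : (u \in B) = (u \in A) && (u \notin D).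
  by rewrite in_setD; have := subsetP subBA u; case: (u \in B); case: (u \in A) => // ->.
clearbody B D.
have cutB_sub : [set p : V * 'I_r | (p.1 \in B) != (sigma p.2 p.1 \in B)] \subset
    [set p : V * 'I_r | (p.1 \in A) != (sigma p.2 p.1 \in A)] :|:
    ([set p : V * 'I_r | p.1 \in D] :|: [set p : V * 'I_r | sigma p.2 p.1 \in D]).
  apply/subsetP => p; rewrite !inE !memB.
  by case: (p.1 \in D); case: (sigma p.2 p.1 \in D); rewrite ?orbT //= !andbT orbF.
apply: (leq_trans (subset_leq_card cutB_sub)).
apply: (leq_trans (leq_card_setU _ _)); rewrite leq_add2l.
apply: (leq_trans (leq_card_setU _ _)); rewrite card_edges_from card_edges_into cardD /k.
nia.
Qed.

Local Open Scope ring_scope.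

Lemma mcut_le_cut_imbalance {R : realDomainType} (A : {set V}) :
  (mcut sigma)%:R <= (cut sigma A)%:R + 2 * r%:R * `|#|A|%:R - #|~: A|%:R| :> R.
Proof.
wlog leCA : A / (#|~: A| <= #|A|)%N => [wlogA|].
  have [|/ltnW] := leqP #|~: A| #|A|; first exact: wlogA.
  by rewrite -{1}(setCK A) => /wlogA; rewrite setCK cut_setC distrC.
have [B bisB cutB] := exists_bisection_cut_le leCA.
rewrite -natrB // ger0_norm // -!natrM -natrD ler_nat.
exact: leq_trans (mcut_le_cut bisB) cutB.
Qed.

End Cuts.

Local Open Scope ring_scope.

(* A pattern on the ball of radius 1: the spin at the root and the spins at its
   2r neighbours, indexed by letters. *)
Definition star r := (bool * {ffun 'I_r * bool -> bool})%type.

Definition star_cyl r (c : star r) : word r -> bool :=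
  fun w => if w is [:: l] then c.2 l else c.1.

Definition star_pattern r (V : finType) (sigma : 'I_r -> {perm V})
    (x : {ffun V -> bool}) (v : V) : star r :=
  (x v, [ffun l => x (lact sigma l v)]).

Definition flip_weight (R : pzRingType) (eps : R) (b b' : bool) : R :=
  if b' == b then 1 - eps else eps.

Lemma ball1 r : ball r 1 = [::] :: [seq [:: l] | l <- enum {: 'I_r * bool}].
Proof. by rewrite /ball /= cats0 filter_predT !cats0. Qed.

Lemma Is_cyl_star (R : realType) r (eps : R) (c : star r) :
  Is_cyl eps 1 (star_cyl c) = 2^-1 * \prod_l flip_weight eps c.1 (c.2 l).
Proof. by rewrite /Is_cyl ball1 big_cons /= big_map big_enum_cond. Qed.

Lemma emp_cyl_star (R : realType) r (V : finType) (sigma : 'I_r -> {perm V}) x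
    (c : star r) :
  emp_cyl R sigma x 1 (star_cyl c) = #|[set v | star_pattern sigma x v == c]|%:R / #|V|%:R.
Proof.
rewrite /emp_cyl; congr (_%:R / _); apply: eq_card => v; rewrite !inE ball1 /=.
rewrite all_map /star_pattern; case: c => b f /=; rewrite xpair_eqE; congr (_ && _).
apply/allP/eqP => [agree|<- l _ /=]; last by rewrite ffunE.
by apply/ffunP => l; rewrite ffunE; apply/eqP; exact: agree (mem_enum _ _).
Qed.

Section IsingStar.

Variables (R : realType) (r : nat) (eps : R).

Lemma sum_flip_weight (b : bool) : \sum_(b' : bool) flip_weight eps b b' = 1.
Proof. by rewrite big_bool /flip_weight; case: b => /=; ring. Qed.

Lemma sum_family_Is_cyl_star (b : bool) (Q : 'I_r * bool -> pred bool) :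
  \sum_(f in family Q) Is_cyl eps 1 (star_cyl (b, f)) =
  2^-1 * \prod_l \sum_(b' | Q l b') flip_weight eps b b'.
Proof.
rewrite (eq_bigr _ (fun f _ => Is_cyl_star eps (b, f))) /=.
by rewrite -mulr_sumr (bigA_distr_big_dep _ (fun l b' => flip_weight eps b b')).
Qed.

Lemma sum_star_split (P : pred (star r)) (F : star r -> R) :
  \sum_(c | P c) F c = \sum_(b : bool) \sum_(f | P (b, f)) F (b, f).
Proof. by rewrite pair_big_dep; apply: eq_big => -[]. Qed.

Lemma sum_star_root (b : bool) (F : star r -> R) :
  \sum_(c | c.1 == b) F c = \sum_f F (b, f).
Proof.
rewrite -(@big_pred1_eq R 0 +%R _ b (fun b' => \sum_f F (b', f))) pair_big_dep /=.
by apply: eq_big => [[b' f]|[]] //=; rewrite andbT.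
Qed.

Lemma sum_Is_cyl_root_spin (b : bool) :
  \sum_(c : star r | c.1 == b) Is_cyl eps 1 (star_cyl c) = 2^-1.
Proof.
rewrite sum_star_root (eq_bigl (fun f => f \in family (fun _ => predT))) => [|f]; last first.
  by symmetry; apply/familyP.
by rewrite sum_family_Is_cyl_star big1 ?mulr1 // => l _; exact: sum_flip_weight.
Qed.

Lemma sum_Is_cyl_edge_disagree (l0 : 'I_r * bool) :
  \sum_(c : star r | c.1 != c.2 l0) Is_cyl eps 1 (star_cyl c) = eps.
Proof.
rewrite sum_star_split /=.
have sum_root b : \sum_(f : {ffun 'I_r * bool -> bool} | b != f l0)
    Is_cyl eps 1 (star_cyl (b, f)) = 2^-1 * eps.
  pose Q l := [pred b' | (l != l0) || (b' != b)].
  rewrite (eq_bigl (fun f => f \in family Q)) => [|f]; last first.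
    apply/idP/familyP => [neq l|/(_ l0)]; rewrite inE; last by rewrite eqxx eq_sym.
    by case: eqP => [->|] //=; rewrite eq_sym.
  rewrite sum_family_Is_cyl_star {}/Q (bigD1 l0) //= [\prod_(_ | _ != l0) _]big1 => [|l nl].
    by rewrite eqxx mulr1 big_mkcond big_bool /flip_weight; case: b; rewrite /= ?add0r ?addr0.
  by rewrite nl sum_flip_weight.
by rewrite big_bool /= !sum_root; lra.
Qed.

End IsingStar.

Section EmpiricalStar.

Variables (R : realType) (r : nat) (eps eta : R).
Variables (V : finType) (sigma : 'I_r -> {perm V}) (x : {ffun V -> bool}).
Hypotheses (V_gt0 : (0 < #|V|)%N) (x_Omega : in_Omega eps 1 eta sigma x).

Let N : R := #|V|%:R.
Let K : R := #|{: star r}|%:R.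

Lemma card_star_pattern_approx (Q : pred (star r)) :
  `| #|[set v | Q (star_pattern sigma x v)]|%:R -
     N * \sum_(c | Q c) Is_cyl eps 1 (star_cyl c) | <= N * K * eta.
Proof.
have N_gt0 : 0 < N by rewrite ltr0n.
have eta_ge0 : 0 <= eta.
  exact: le_trans (normr_ge0 _) (ltW (x_Omega (star_cyl (true, [ffun=> true])))).
have cardQ : #|[set v | Q (star_pattern sigma x v)]| =
    (\sum_(c | Q c) #|[set v | star_pattern sigma x v == c]|)%N.
  rewrite -sum1_card (partition_big (star_pattern sigma x) Q) => [|v]; last by rewrite inE.
  apply: eq_bigr => c Qc; rewrite -sum1_card; apply: eq_bigl => v; rewrite !inE.
  by case: eqP => [->|_]; rewrite ?Qc ?andbF.
have fiber_approx c : `|#|[set v | star_pattern sigma x v == c]|%:R -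
    N * Is_cyl eps 1 (star_cyl c)| <= N * eta.
  have := ltW (x_Omega (star_cyl c)); rewrite emp_cyl_star -/N => fiber_approx.
  set m := #|_|%:R; have -> : m = N * (m / N) by rewrite mulrC mulfVK ?lt0r_neq0 ?N_gt0.
  by rewrite -mulrBr normrM ger0_norm ?(ltW N_gt0) // ler_pM2l ?N_gt0.
rewrite cardQ natr_sum mulr_sumr -sumrB (le_trans (ler_norm_sum _ _ _)) //.
rewrite (le_trans (ler_sum _ (fun c _ => fiber_approx c))) // big_mkcond /=.
rewrite mulrAC /K mulr_natr -sumr_const ler_sum // => c _.
by case: ifP => _ //; rewrite mulr_ge0 // ltW ?N_gt0.
Qed.

Lemma card_disagree_le (i : 'I_r) :
  #|[set v | x v != x (sigma i v)]|%:R <= N * (eps + K * eta).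
Proof.
have := card_star_pattern_approx (fun c => c.1 != c.2 (i, false)).
rewrite sum_Is_cyl_edge_disagree mulrDr mulrA ler_distl => /andP[_]; congr (_%:R <= _).
by apply: eq_card => v; rewrite !inE ffunE.
Qed.

Lemma card_spin_le (b : bool) : #|[set v | x v == b]|%:R <= N * (2^-1 + K * eta).
Proof.
have := card_star_pattern_approx (fun c => c.1 == b).
by rewrite sum_Is_cyl_root_spin mulrDr mulrA ler_distl => /andP[_].
Qed.

Lemma cut_level_set_le : (cut sigma [set v | x v])%:R <= r%:R * (N * (eps + K * eta)).
Proof.
rewrite cut_level_set natr_sum mulr_natl -[r in _ *+ r]card_ord -sumr_const.
by apply: ler_sum => i _; exact: card_disagree_le.
Qed.

Lemma level_set_imbalance :
  `| #|[set v | x v]|%:R - #|~: [set v | x v]|%:R | <= 2 * (N * K * eta).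
Proof.
have pos_spins : [set v | x v] = [set v | x v == true].
  by apply/setP => v; rewrite !inE eqb_id.
have neg_spins : ~: [set v | x v] = [set v | x v == false].
  by apply/setP => v; rewrite !inE eqbF_neg.
have := card_spin_le true; have := card_spin_le false.
have /(congr1 (fun n => n%:R : R)) := cardsC [set v | x v].
rewrite natrD -/N neg_spins pos_spins ler_norml; lra.
Qed.

End EmpiricalStar.

Theorem mainTheorem15 (R : realType) (r : nat) (eps : R) :
  (0 < r)%N -> 0 < eps -> eps <= 2^-1 ->
  forall delta : R, 0 < delta ->
  exists (n : nat) (eta : R), 0 < eta /\
    forall (V : finType) (sigma : 'I_r -> {perm V}),
      (0 < #|V|)%N ->
      (exists x : {ffun V -> bool}, in_Omega eps n eta sigma x) ->
      ((mcut sigma)%:R : R) < (#|V| * r)%:R * (eps + delta).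
Proof.
move=> r_gt0 _ _ delta delta_gt0.
have K_gt0 : 0 < #|{: star r}|%:R :> R.
  by rewrite ltr0n; apply/card_gt0P; exists (true, [ffun=> true]).
set K : R := #|{: star r}|%:R in K_gt0 *.
(* The two error terms cost K eta and 4 K eta; a sixth of delta leaves room. *)
exists 1%N, (delta / (6 * K)); split; first by rewrite divr_gt0 ?mulr_gt0.
move=> V sigma V_gt0 [x x_Omega].
have Keta : K * (delta / (6 * K)) = delta / 6 by field; rewrite lt0r_neq0.
have cut_le := cut_level_set_le V_gt0 x_Omega.
have imbalance_le := level_set_imbalance V_gt0 x_Omega.
rewrite -/K -mulrA Keta in cut_le imbalance_le.
apply: le_lt_trans (mcut_le_cut_imbalance sigma [set v | x v]) _.
apply: le_lt_trans (lerD cut_le (ler_wpM2l _ imbalance_le)) _; first by rewrite mulr_ge0.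
rewrite -subr_gt0 natrM.
set N : R := #|V|%:R; set rr : R := r%:R.
have -> : N * rr * (eps + delta) -
    (rr * (N * (eps + delta / 6)) + 2 * rr * (2 * (N * (delta / 6)))) = N * rr * delta / 6.
  by field.
by rewrite !divr_gt0 ?mulr_gt0 ?ltr0n.
Qed.
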